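(* For a liner $X$ the following are equivalent: (1) $X$ is modular; (2) $X$ is strongly regular; (3) $X$ contains no two disjoint coplanar lines.
   Context: A liner is a set $X$ of points with a family of subsets called lines such that any two distinct points lie in a unique line and every line contains at least two points. For distinct $x,y$, $\overline{xy}$ is the line through them. A set is flat if it contains $\overline{xy}$ for all its distinct points $x,y$; $\overline A$ is the smallest flat containing $A$. The rank $\|A\|$ is the smallest cardinality of $B\subseteq X$ with $A\subseteq\overline B$. A plane is a flat of rank $3$; two lines are coplanar if both are contained in some plane. $X$ is modular if $\|A\cap B\|+\|A\cup B\|=\|A\|+\|B\|$ for all flats $A,B\subseteq X$. $X$ is strongly regular if for every nonempty flat $A\subseteq X$ and point $b\in X\setminus A$ we have $\overline{A\cup\{b\}}=\bigcup_{a\in A}\overline{ab}$. *)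

From Stdlib Require Import Classical.

Set Implicit Arguments.

Section Liners.
Variable X : Type.
Variable L : (X -> Prop) -> Prop.

Definition is_liner : Prop :=
  (forall l, L l -> exists x y, x <> y /\ l x /\ l y) /\
  (forall x y, x <> y -> exists l, L l /\ l x /\ l y /\
     forall l', L l' -> l' x -> l' y -> forall z, l' z <-> l z).

(* the line through x and y (meaningful for x <> y) *)
Definition line (x y : X) : X -> Prop :=
  fun z => exists l, L l /\ l x /\ l y /\ l z.

Definition subset (A B : X -> Prop) : Prop := forall z, A z -> B z.

Definition flat (A : X -> Prop) : Prop :=
  forall x y, x <> y -> A x -> A y -> subset (line x y) A.

Definition closure (A : X -> Prop) : X -> Prop :=
  fun z => forall F, flat F -> subset A F -> F z.

(* Cardinal comparison of (sub)sets, via their sigma-types. *)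
Definition card_le (T U : Type) : Prop :=
  exists f : T -> U, forall a b, f a = f b -> a = b.

Definition equipotent (T U : Type) : Prop :=
  exists (f : T -> U) (g : U -> T),
    (forall a, g (f a) = a) /\ (forall b, f (g b) = b).

(* B realizes the rank of A: A is contained in the closure of B, and B has the
   smallest cardinality among all such sets. So the cardinal of B is ||A||. *)
Definition rank_basis (A B : X -> Prop) : Prop :=
  subset A (closure B) /\
  forall C, subset A (closure C) -> card_le {x | B x} {x | C x}.

Definition modular : Prop :=
  forall A B, flat A -> flat B ->
  forall BI BU BA BB,
    rank_basis (fun z => A z /\ B z) BI ->
    rank_basis (fun z => A z \/ B z) BU ->
    rank_basis A BA -> rank_basis B BB ->
    equipotent ({x | BI x} + {x | BU x})%type ({x | BA x} + {x | BB x})%type.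

Definition strongly_regular : Prop :=
  forall A b, flat A -> (exists a, A a) -> ~ A b ->
    forall z, closure (fun w => A w \/ w = b) z <-> exists a, A a /\ line a b z.

Definition plane (P : X -> Prop) : Prop :=
  flat P /\ exists B, rank_basis P B /\ equipotent {x | B x} {i : nat | i < 3}.

Definition coplanar (l1 l2 : X -> Prop) : Prop :=
  exists P, plane P /\ subset l1 P /\ subset l2 P.

Definition no_disjoint_coplanar_lines : Prop :=
  ~ exists l1 l2, L l1 /\ L l2 /\ (forall z, ~ (l1 z /\ l2 z)) /\ coplanar l1 l2.

End Liners.

(* (3) -> (2): for a flat A and b outside it, the union of the lines ab (a in A) is flat. A point w
   on a line xy with x in a1b and y in a2b lies in the plane spanned by a1, a2, b, where the
   coplanar lines bw and a1a2 must meet, in a point a of A; so w lies on ab.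
   (2) -> (1): strong regularity yields the exchange property, so closure is a finitary matroid.
   Independent spanning sets exist by Zorn's lemma, an independent set injects into every
   spanning set (a maximal partial exchange, again by Zorn), hence all bases of a flat are
   equipotent (Schroeder-Bernstein). The modular law B /\ cl (A \/ S) <= cl S for S <= B turns a
   basis of A /\ B, extended to one of A and then of A \/ B, into a basis of B as well.
   (1) -> (3): two disjoint lines in a plane would give 0 + 3 = 2 + 2. *)

From Stdlib Require Import Classical ClassicalEpsilon ProofIrrelevance List Lia.
From mathcomp Require classical_sets boolp.

Set Implicit Arguments.
Unset Strict Implicit.
Unset Asymmetric Patterns.

(** * Cardinal comparisons *)

Lemma equipotent_sym T U : equipotent T U -> equipotent U T.
Proof. intros [f [g [gf fg]]]. exists g, f. auto. Qed.

Lemma equipotent_trans T U V : equipotent T U -> equipotent U V -> equipotent T V.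
Proof.
  intros [f [g [gf fg]]] [f' [g' [gf' fg']]].
  exists (fun x => f' (f x)), (fun x => g (g' x)).
  split; intros; [rewrite gf'|rewrite fg]; auto.
Qed.

Lemma equipotent_sum T U T' U' :
  equipotent T T' -> equipotent U U' -> equipotent (T + U) (T' + U').
Proof.
  intros [f [g [gf fg]]] [f' [g' [gf' fg']]].
  exists (fun s => match s with inl a => inl (f a) | inr b => inr (f' b) end),
         (fun s => match s with inl a => inl (g a) | inr b => inr (g' b) end).
  split; intros [a|b]; f_equal; auto.
Qed.

Lemma card_le_trans T U V : card_le T U -> card_le U V -> card_le T V.
Proof. intros [f fi] [g gi]. exists (fun t => g (f t)). auto. Qed.

Lemma equipotent_card_le T U : equipotent T U -> card_le T U.
Proof.
  intros [f [g [gf _]]]. exists f. intros a b e. rewrite <- (gf a), e. apply gf.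
Qed.

Lemma card_le_sum_void T U : (T -> False) -> card_le (T + U) U.
Proof.
  intros nT. exists (fun s => match s with inl t => False_rect U (nT t) | inr u => u end).
  intros [t|u] [t'|u'] e; try contradiction; congruence.
Qed.

Lemma four_not_card_le_three T (a b c d : T) :
  a <> b -> a <> c -> a <> d -> b <> c -> b <> d -> c <> d ->
  ~ card_le T {i | i < 3}.
Proof.
  intros ab ac ad bc bd cd [f fi].
  assert (fne : forall s t, s <> t -> proj1_sig (f s) <> proj1_sig (f t)).
  { intros s t st e. apply st, fi.
    destruct (f s), (f t); simpl in e. apply subset_eq_compat. exact e. }
  pose proof (proj2_sig (f a)). pose proof (proj2_sig (f b)).
  pose proof (proj2_sig (f c)). pose proof (proj2_sig (f d)).
  pose proof (fne _ _ ab). pose proof (fne _ _ ac). pose proof (fne _ _ ad).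
  pose proof (fne _ _ bc). pose proof (fne _ _ bd). pose proof (fne _ _ cd).
  simpl in *. lia.
Qed.

(* Schroeder-Bernstein: [h] follows [f] on the [g o f]-orbits of points outside the range of [g],
   and follows [g^-1] elsewhere. *)
Lemma card_le_antisym T U : card_le T U -> card_le U T -> equipotent T U.
Proof.
  intros [f fi] [g gi].
  set (C := fun t => exists n t0, (~ exists u, g u = t0) /\ t = Nat.iter n (fun s => g (f s)) t0).
  assert (g_onto : forall t, ~ C t -> exists u, g u = t).
  { intros t nt. apply NNPP; intro h. apply nt. exists 0, t. auto. }
  set (h := fun t => match excluded_middle_informative (C t) with
                     | left _ => f t
                     | right nt => proj1_sig (constructive_indefinite_description _ (g_onto t nt))
                     end).
  assert (h_cases : forall t, (C t /\ h t = f t) \/ (~ C t /\ g (h t) = t)).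
  { intros t. unfold h. destruct (excluded_middle_informative (C t)) as [c|c]; [left; auto|right].
    destruct (constructive_indefinite_description _ (g_onto t c)); simpl; auto. }
  assert (C_step : forall t, C t -> C (g (f t))).
  { intros t [n [t0 [h1 h2]]]. exists (S n), t0. split; auto. simpl. rewrite h2; auto. }
  assert (h_inj : forall a b, h a = h b -> a = b).
  { intros a b e.
    destruct (h_cases a) as [[ca ea]|[ca ea]]; destruct (h_cases b) as [[cb eb]|[cb eb]].
    - apply fi. congruence.
    - exfalso. apply cb. rewrite <- eb, <- e, ea. auto.
    - exfalso. apply ca. rewrite <- ea, e, eb. auto.
    - rewrite <- ea, <- eb, e. auto. }
  assert (h_onto : forall u, exists t, h t = u).
  { intros u. destruct (classic (C (g u))) as [[n [t0 [n0 e]]]|c].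
    - destruct n as [|m]; simpl in e; [exfalso; eauto|].
      apply gi in e. exists (Nat.iter m (fun s => g (f s)) t0).
      destruct (h_cases (Nat.iter m (fun s => g (f s)) t0)) as [[_ e2]|[e2 _]].
      + rewrite e2. auto.
      + exfalso. apply e2. exists m, t0. auto.
    - exists (g u). destruct (h_cases (g u)) as [[c2 _]|[_ e]]; [contradiction|]. auto. }
  exists h, (fun u => proj1_sig (constructive_indefinite_description _ (h_onto u))).
  split.
  - intros a. apply h_inj.
    destruct (constructive_indefinite_description _ (h_onto (h a))); simpl; auto.
  - intros b. destruct (constructive_indefinite_description _ (h_onto b)); simpl; auto.
Qed.

(* For [I <= IA <= IU] each point of [IU] is counted in [IA] or in the second summand on the
   right, and each point of [I] once more on each side. *)
Lemma equipotent_sum_nested (Y : Type) (I IA IU : Y -> Prop) :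
  subset I IA -> subset IA IU ->
  equipotent ({x | I x} + {x | IU x})%type
             ({x | IA x} + {x | I x \/ (IU x /\ ~ IA x)})%type.
Proof.
  intros IIA IAU.
  set (J := fun x => I x \/ (IU x /\ ~ IA x)).
  assert (JIU : forall y, J y -> ~ I y -> IU y) by (unfold J; tauto).
  exists (fun s : ({x | I x} + {x | IU x})%type => match s with
           | inl (exist _ i Ii) => inr (exist J i (or_introl Ii))
           | inr (exist _ u Uu) => match excluded_middle_informative (IA u) with
                                 | left h => inl (exist IA u h)
                                 | right h => inr (exist J u (or_intror (conj Uu h)))
                                 end end),
         (fun s : ({x | IA x} + {x | J x})%type => match s with
           | inl (exist _ a Aa) => inr (exist IU a (IAU a Aa))
           | inr (exist _ b Jb) => match excluded_middle_informative (I b) with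
                                 | left h => inl (exist I b h)
                                 | right h => inr (exist IU b (JIU b Jb h))
                                 end end).
  split.
  - intros [[i Ii]|[u Uu]].
    + destruct (excluded_middle_informative (I i)); [|contradiction].
      f_equal. apply subset_eq_compat; auto.
    + destruct (excluded_middle_informative (IA u)) as [h|h].
      * f_equal. apply subset_eq_compat; auto.
      * destruct (excluded_middle_informative (I u)) as [h'|h'].
        -- exfalso. apply h, IIA, h'.
        -- f_equal. apply subset_eq_compat; auto.
  - intros [[a Aa]|[b Jb]].
    + destruct (excluded_middle_informative (IA a)); [|contradiction].
      f_equal. apply subset_eq_compat; auto.
    + destruct (excluded_middle_informative (I b)) as [h|h].
      * f_equal. apply subset_eq_compat; auto.
      * destruct (excluded_middle_informative (IA b)) as [h'|h'].
        -- exfalso. destruct Jb as [Ib|[_ nb]]; auto.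
        -- f_equal. apply subset_eq_compat; auto.
Qed.

Lemma zorn_subset (T : Type) (P : (T -> Prop) -> Prop) :
  (forall F : (T -> Prop) -> Prop, (forall S, F S -> P S) ->
     (forall S1 S2, F S1 -> F S2 -> subset S1 S2 \/ subset S2 S1) ->
     P (fun x => exists S, F S /\ S x)) ->
  exists A, P A /\ forall B, subset A B -> P B -> subset B A.
Proof.
  intros H.
  destruct (@classical_sets.Zorn_bigcup T P) as [A [PA Amax]].
  - intros F FP Ftot.
    replace (classical_sets.bigcup F (fun S => S)) with (fun x => exists S, F S /\ S x).
    + apply H; [exact FP|exact Ftot].
    + apply boolp.funext; intro x; apply boolp.propext; split.
      * intros [S [FS Sx]]; exists S; auto.
      * intros [S FS Sx]; eauto.
  - exists A. split; auto. intros B AB PB x Bx.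
    apply NNPP; intro nA. apply (Amax B); auto.
    split; [exact AB|]. intro BA. apply nA, BA, Bx.
Qed.

Lemma chain_covers_list (X Y : Type) (F : (Y -> Prop) -> Prop) (Q : (Y -> Prop) -> X -> Prop)
    (P0 : X -> Prop) :
  (forall S1 S2, F S1 -> F S2 -> subset S1 S2 \/ subset S2 S1) ->
  (forall S1 S2 w, subset S1 S2 -> Q S1 w -> Q S2 w) ->
  forall l, (forall w, In w l -> P0 w \/ exists S, F S /\ Q S w) ->
  (forall w, In w l -> P0 w) \/ exists M, F M /\ forall w, In w l -> P0 w \/ Q M w.
Proof.
  intros tot mono l. induction l as [|a l IH]; intros H.
  - left. intros w [].
  - assert (IH' := IH (fun w hw => H w (or_intror hw))).
    destruct (H a (or_introl eq_refl)) as [Pa|[S [FS QS]]];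
      destruct IH' as [IHl|[M [FM HM]]].
    + left. intros w [<-|hw]; auto.
    + right. exists M. split; auto. intros w [<-|hw]; auto.
    + right. exists S. split; auto. intros w [<-|hw]; auto.
    + destruct (tot S M FS FM) as [SM|MS].
      * right. exists M. split; auto. intros w [<-|hw]; eauto.
      * right. exists S. split; auto. intros w [<-|hw]; auto.
        destruct (HM w hw); eauto.
Qed.

(** * Flats and closures in a liner *)

Section Liner.
Variable X : Type.
Variable L : (X -> Prop) -> Prop.
Hypothesis HL : is_liner L.

Notation cl := (closure L).
Notation ln := (line L).

Lemma line_unique x y l : x <> y -> L l -> l x -> l y -> forall z, ln x y z <-> l z.
Proof.
  intros xy Ll lx ly z. destruct HL as [_ H2].
  destruct (H2 x y xy) as [l0 [L0 [l0x [l0y U]]]].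
  split.
  - intros [l' [L' [l'x [l'y l'z]]]].
    apply (U l Ll lx ly), (U l' L' l'x l'y), l'z.
  - intros lz. exists l; auto.
Qed.

Lemma line_exists x y : x <> y -> exists l, L l /\ l x /\ l y.
Proof. intros xy. destruct HL as [_ H2]. destruct (H2 x y xy) as [l [? [? [? _]]]]. eauto. Qed.

Lemma line_left x y : x <> y -> ln x y x.
Proof. intros xy. destruct (line_exists xy) as [l [? [? ?]]]. exists l; auto. Qed.

Lemma line_right x y : x <> y -> ln x y y.
Proof. intros xy. destruct (line_exists xy) as [l [? [? ?]]]. exists l; auto. Qed.

Lemma line_eq x y u v : x <> y -> u <> v -> ln x y u -> ln x y v ->
  forall z, ln u v z <-> ln x y z.
Proof.
  intros xy uv hu hv z. destruct (line_exists xy) as [l [Ll [lx ly]]].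
  rewrite (line_unique xy Ll lx ly z).
  apply line_unique; auto; apply (line_unique xy Ll lx ly); auto.
Qed.

Lemma flat_of_line l : L l -> flat L l.
Proof. intros Ll u v uv lu lv z h. apply (line_unique uv Ll lu lv); auto. Qed.

Lemma flat_line x y : x <> y -> flat L (ln x y).
Proof. intros xy u v uv hu hv z hz. apply (line_eq xy uv hu hv); auto. Qed.

Lemma flat_singleton c : flat L (fun w => w = c).
Proof. intros u v uv hu hv. subst. congruence. Qed.

Lemma flat_empty : flat L (fun _ => False).
Proof. intros u v uv hu. contradiction. Qed.

Lemma flat_line_subset F x y : flat L F -> x <> y -> F x -> F y -> subset (ln x y) F.
Proof. intros FF xy fx fy. apply FF; auto. Qed.

Lemma closure_flat A : flat L (cl A).
Proof. intros u v uv hu hv z hz F FF AF. exact (FF u v uv (hu F FF AF) (hv F FF AF) z hz). Qed.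

Lemma subset_closure A : subset A (cl A).
Proof. intros z Az F FF AF. auto. Qed.

Lemma closure_min A F : flat L F -> subset A F -> subset (cl A) F.
Proof. intros FF AF z h. apply h; auto. Qed.

Lemma closure_mono A B : subset A B -> subset (cl A) (cl B).
Proof. intros AB z h F FF BF. apply h; auto. intros w Aw; auto. Qed.

Lemma closure_line A x y z : x <> y -> cl A x -> cl A y -> ln x y z -> cl A z.
Proof. intros xy hx hy. apply (flat_line_subset (@closure_flat A) xy hx hy). Qed.

Lemma closure_finitary A z : cl A z ->
  exists l : list X, (forall w, In w l -> A w) /\ cl (fun w => In w l) z.
Proof.
  revert z.
  apply (closure_min (F := fun z => exists l, (forall w, In w l -> A w) /\ cl (fun w => In w l) z)).
  - intros u v uv [l1 [h1 c1]] [l2 [h2 c2]] z hz.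
    exists (l1 ++ l2). split.
    + intros w hw. apply in_app_or in hw. destruct hw; auto.
    + apply (closure_line uv); auto.
      * apply (closure_mono (A := fun w => In w l1)); auto. intros w hw. apply in_or_app; auto.
      * apply (closure_mono (A := fun w => In w l2)); auto. intros w hw. apply in_or_app; auto.
  - intros w Aw. exists (w :: nil). split.
    + intros w' [<-|[]]; auto.
    + apply subset_closure. simpl; auto.
Qed.

Lemma closure_subsingleton C : (forall c1 c2, C c1 -> C c2 -> c1 = c2) ->
  forall x y, cl C x -> cl C y -> x = y.
Proof.
  intros C1 x y hx hy.
  destruct (classic (exists c, C c)) as [[c hc]|nC].
  - assert (S : subset (cl C) (fun w => w = c)).
    { apply closure_min. apply flat_singleton. intros w hw. apply C1; auto. }
    rewrite (S _ hx), (S _ hy). auto.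
  - assert (S : subset (cl C) (fun _ => False)).
    { apply closure_min. apply flat_empty. intros w hw. apply nC. eauto. }
    destruct (S _ hx).
Qed.

Definition three_distinct (C : X -> Prop) : Prop :=
  exists c0 c1 c2, C c0 /\ C c1 /\ C c2 /\ c0 <> c1 /\ c0 <> c2 /\ c1 <> c2.

Lemma closure_in_line C : ~ three_distinct C ->
  forall x y, x <> y -> cl C x -> cl C y -> subset (cl C) (ln x y).
Proof.
  intros C3 x y xy hx hy.
  destruct (classic (exists c1 c2, C c1 /\ C c2 /\ c1 <> c2)) as [[c1 [c2 [h1 [h2 h12]]]]|C2].
  - assert (S : subset (cl C) (ln c1 c2)).
    { apply closure_min; [apply flat_line; auto|].
      intros c hc. destruct (classic (c = c1)) as [->|n1]; [apply line_left; auto|].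
      destruct (classic (c = c2)) as [->|n2]; [apply line_right; auto|].
      exfalso. apply C3. exists c1, c2, c. auto 7. }
    intros z hz. apply (line_eq h12 xy (S _ hx) (S _ hy)). auto.
  - exfalso. apply xy. apply (closure_subsingleton (C := C)); auto.
    intros c1 c2 h1 h2. apply NNPP. intro n. apply C2. eauto.
Qed.

Lemma three_distinct_of_spanning C x y z : x <> y -> ~ ln x y z ->
  cl C x -> cl C y -> cl C z -> three_distinct C.
Proof.
  intros xy nz hx hy hz. apply NNPP. intro C3.
  exact (nz (closure_in_line C3 xy hx hy hz)).
Qed.

Lemma card_le_three T (C : X -> Prop) : equipotent T {i | i < 3} -> three_distinct C ->
  card_le T {x | C x}.
Proof.
  intros eT [c0 [c1 [c2 [h0 [h1 [h2 [d01 [d02 d12]]]]]]]].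
  apply (card_le_trans (equipotent_card_le eT)).
  set (pick := fun n : nat => match n with 0 => c0 | 1 => c1 | _ => c2 end).
  assert (pC : forall n, C (pick n)) by (intros [|[|n]]; simpl; auto).
  exists (fun i => exist C (pick (proj1_sig i)) (pC _)).
  intros [n hn] [m hm] e. injection e. intros e'. apply subset_eq_compat.
  destruct n as [|[|[|n]]]; destruct m as [|[|[|m]]]; simpl in e'; try lia; congruence.
Qed.

Lemma equipotent_triple (a b c : X) : a <> b -> a <> c -> b <> c ->
  equipotent {v | v = a \/ v = b \/ v = c} {i | i < 3}.
Proof.
  intros ab ac bc. apply card_le_antisym.
  - set (idx := fun v => if excluded_middle_informative (v = a) then 0
                         else if excluded_middle_informative (v = b) then 1 else 2).
    assert (idx3 : forall v, idx v < 3).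
    { intros v. unfold idx.
      destruct (excluded_middle_informative (v = a)); [lia|].
      destruct (excluded_middle_informative (v = b)); lia. }
    exists (fun v => exist (fun i => i < 3) (idx (proj1_sig v)) (idx3 _)).
    intros [v hv] [w hw] e. injection e. intros e'. apply subset_eq_compat. simpl in e'.
    unfold idx in e'.
    destruct (excluded_middle_informative (v = a));
      destruct (excluded_middle_informative (w = a));
      destruct (excluded_middle_informative (v = b));
      destruct (excluded_middle_informative (w = b)); try discriminate; try congruence.
    destruct hv as [?|[?|?]]; destruct hw as [?|[?|?]]; congruence.
  - apply card_le_three; [exists (fun i => i); exists (fun i => i); auto|].
    exists a, b, c. auto 10.
Qed.

Lemma rank_basis_line l x y : L l -> x <> y -> l x -> l y ->
  rank_basis L l (fun z => z = x \/ z = y).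
Proof.
  intros Ll xy lx ly. split.
  - intros z lz. apply (closure_line xy); try (apply subset_closure; auto).
    apply (line_unique xy Ll lx ly); auto.
  - intros C hC. destruct (classic (exists c0 c1, C c0 /\ C c1 /\ c0 <> c1))
      as [[c0 [c1 [h0 [h1 h01]]]]|C2].
    + exists (fun s => if excluded_middle_informative (proj1_sig s = x)
                       then exist C c0 h0 else exist C c1 h1).
      intros [s hs] [t ht]. simpl.
      destruct (excluded_middle_informative (s = x));
        destruct (excluded_middle_informative (t = x)); intros E;
        try (injection E; congruence); apply subset_eq_compat;
        destruct hs; destruct ht; congruence.
    + exfalso. apply xy. apply (closure_subsingleton (C := C)); auto.
      intros c1 c2 h1 h2. apply NNPP. intro n. apply C2. eauto.
Qed.

Lemma rank_basis_empty A : (forall z, ~ A z) -> rank_basis L A (fun _ => False).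
Proof.
  intros nA. split.
  - intros z Az. destruct (nA z Az).
  - intros C _. exists (fun s : {x : X | False} => False_rect {x | C x} (proj2_sig s)).
    intros [a []].
Qed.

Lemma rank_basis_three A B x y z : equipotent {v | B v} {i | i < 3} ->
  subset A (cl B) -> A x -> A y -> A z -> x <> y -> ~ ln x y z -> rank_basis L A B.
Proof.
  intros B3 AB Ax Ay Az xy nz. split; auto.
  intros C hC. apply (card_le_three B3).
  apply (three_distinct_of_spanning xy nz); auto.
Qed.

Lemma plane_closure_triple x y z : x <> y -> ~ ln x y z ->
  plane L (cl (fun v => v = x \/ v = y \/ v = z)).
Proof.
  intros xy nz.
  assert (xz : x <> z) by (intros <-; apply nz, line_left, xy).
  assert (yz : y <> z) by (intros <-; apply nz, line_right, xy).
  assert (B3 := equipotent_triple xy xz yz).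
  split; [apply closure_flat|]. exists (fun v => v = x \/ v = y \/ v = z). split; auto.
  apply (rank_basis_three B3 (fun v h => h) (x := x) (y := y) (z := z)); auto;
    apply subset_closure; auto.
Qed.

(** * Modularity, strong regularity and coplanar lines *)

Lemma modular_no_disjoint_coplanar_lines : modular L -> no_disjoint_coplanar_lines L.
Proof.
  intros M [l1 [l2 [L1 [L2 [disj [P [[FP [BP [rP eP]]] [s1 s2]]]]]]]].
  destruct HL as [H1 _].
  destruct (H1 l1 L1) as [x1 [y1 [d1 [x1l y1l]]]].
  destruct (H1 l2 L2) as [x2 [y2 [d2 [x2l y2l]]]].
  assert (rI : rank_basis L (fun z => l1 z /\ l2 z) (fun _ => False)).
  { apply rank_basis_empty. intros z. apply disj. }
  assert (rU : rank_basis L (fun z => l1 z \/ l2 z) BP).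
  { apply (rank_basis_three eP (x := x1) (y := y1) (z := x2)); auto.
    - intros z [h|h]; apply (proj1 rP); auto.
    - intros h. apply (disj x2). split; auto. apply (line_unique d1 L1 x1l y1l); auto. }
  assert (E := M l1 l2 (flat_of_line L1) (flat_of_line L2) _ _ _ _ rI rU
                 (rank_basis_line L1 d1 x1l y1l) (rank_basis_line L2 d2 x2l y2l)).
  set (T := ({x | x = x1 \/ x = y1} + {x | x = x2 \/ x = y2})%type).
  apply (@four_not_card_le_three T
           (inl (exist _ x1 (or_introl eq_refl))) (inl (exist _ y1 (or_intror eq_refl)))
           (inr (exist _ x2 (or_introl eq_refl))) (inr (exist _ y2 (or_intror eq_refl))));
    try discriminate; try (intros e; injection e; auto).
  apply (card_le_trans (equipotent_card_le (equipotent_sym E))).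
  apply (card_le_trans (card_le_sum_void _ (fun s => proj2_sig s))).
  apply equipotent_card_le, eP.
Qed.

Lemma coplanar_lines_meet m1 m2 P : no_disjoint_coplanar_lines L ->
  L m1 -> L m2 -> plane L P -> subset m1 P -> subset m2 P -> exists v, m1 v /\ m2 v.
Proof.
  intros ND M1 M2 PP s1 s2. apply NNPP. intros disj. apply ND.
  exists m1, m2. repeat split; auto.
  - intros v hv. apply disj. eauto.
  - exists P. auto.
Qed.

Lemma flat_cone A b : no_disjoint_coplanar_lines L -> flat L A -> ~ A b ->
  flat L (fun z => exists a, A a /\ ln a b z).
Proof.
  intros ND FA nAb x y xy [a1 [A1 l1x]] [a2 [A2 l2y]] w hw.
  assert (a1b : a1 <> b) by (intros ->; contradiction).
  assert (a2b : a2 <> b) by (intros ->; contradiction).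
  destruct (classic (a1 = a2)) as [<-|a12].
  { exists a1. split; auto. apply (line_eq a1b xy l1x l2y); auto. }
  destruct (classic (w = b)) as [->|wb].
  { exists a1. split; auto. apply line_right; auto. }
  set (P := cl (fun v => v = a1 \/ v = a2 \/ v = b)).
  assert (Pa1 : P a1) by (apply subset_closure; auto).
  assert (Pa2 : P a2) by (apply subset_closure; auto).
  assert (Pb : P b) by (apply subset_closure; auto).
  assert (Pw : P w).
  { apply (closure_line xy); auto.
    - apply (closure_line a1b); auto.
    - apply (closure_line a2b); auto. }
  assert (PP : plane L P).
  { apply plane_closure_triple; auto. intros h. apply nAb, (FA a1 a2 a12 A1 A2), h. }
  destruct (line_exists (not_eq_sym wb)) as [m1 [M1 [m1b m1w]]].
  destruct (line_exists a12) as [m2 [M2 [m2a1 m2a2]]].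
  destruct (coplanar_lines_meet ND M1 M2 PP) as [v [h1 h2]].
  - intros u hu. apply (closure_line (not_eq_sym wb)); auto.
    apply (line_unique (not_eq_sym wb) M1 m1b m1w); auto.
  - intros u hu. apply (closure_line a12); auto.
    apply (line_unique a12 M2 m2a1 m2a2); auto.
  - assert (Av : A v).
    { apply (FA a1 a2 a12 A1 A2). apply (line_unique a12 M2 m2a1 m2a2); auto. }
    assert (vb : v <> b) by (intros ->; contradiction).
    exists v. split; auto. apply (line_unique vb M1 h1 m1b); auto.
Qed.

Lemma no_disjoint_coplanar_lines_strongly_regular :
  no_disjoint_coplanar_lines L -> strongly_regular L.
Proof.
  intros ND A b FA [a0 Aa0] nAb z. split.
  - revert z. apply closure_min; [apply flat_cone; auto|].
    intros w [Aw| ->].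
    + exists w. split; auto. apply line_left. intros ->; contradiction.
    + exists a0. split; auto. apply line_right. intros ->; contradiction.
  - intros [a [Aa lab]]. assert (ab : a <> b) by (intros ->; contradiction).
    apply (closure_line ab); auto; apply subset_closure; auto.
Qed.

(** * The matroid of a strongly regular liner *)

Section StronglyRegular.
Hypothesis SR : strongly_regular L.

Lemma closure_add_point S b z : cl (fun w => S w \/ w = b) z ->
  z = b \/ cl S z \/ exists a, cl S a /\ a <> b /\ ln a b z.
Proof.
  intros hz.
  destruct (classic (exists a, cl S a)) as [nS|nS].
  2:{ left. revert z hz. apply closure_min; [apply flat_singleton|].
      intros w [Sw| ->]; auto. exfalso. apply nS. exists w. apply subset_closure, Sw. }
  destruct (classic (cl S b)) as [Sb|nSb].
  { right; left. revert z hz. apply closure_min; [apply closure_flat|].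
    intros w [Sw| ->]; auto. apply subset_closure, Sw. }
  right; right.
  assert (hz' : cl (fun w => cl S w \/ w = b) z).
  { revert z hz. apply closure_mono. intros w [Sw|Ew]; auto. left. apply subset_closure, Sw. }
  destruct (proj1 (@SR (cl S) b (@closure_flat S) nS nSb z) hz') as [a [Sa lab]].
  exists a. repeat split; auto. intros ->. contradiction.
Qed.

Lemma closure_exchange S b z : cl (fun w => S w \/ w = b) z -> ~ cl S z ->
  cl (fun w => S w \/ w = z) b.
Proof.
  intros hz nz.
  assert (Sz_b : subset (cl S) (cl (fun w => S w \/ w = z))).
  { apply closure_mono. intros w Sw; auto. }
  destruct (closure_add_point hz) as [->|[Sz|[a [Sa [ab lab]]]]].
  - apply subset_closure. auto.
  - contradiction.
  - assert (za : z <> a) by (intros ->; contradiction).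
    apply (closure_line (not_eq_sym za)); [auto|apply subset_closure; auto|].
    apply (line_eq ab (not_eq_sym za) (line_left ab) lab). apply line_right; auto.
Qed.

Definition independent (S : X -> Prop) : Prop :=
  forall x, S x -> ~ cl (fun w => S w /\ w <> x) x.

Lemma independent_subset S T : independent S -> subset T S -> independent T.
Proof.
  intros iS TS x Tx h. apply (iS x (TS x Tx)). revert h.
  apply closure_mono. intros w [Tw wx]; auto.
Qed.

Lemma independent_add S c : independent S -> ~ cl S c -> independent (fun w => S w \/ w = c).
Proof.
  intros iS nc x hx h.
  destruct (classic (x = c)) as [->|xc].
  - apply nc. revert h. apply closure_mono. intros w [[Sw| ->] wc]; [auto|contradiction].
  - destruct hx as [Sx|]; [|contradiction].
    assert (h' : cl (fun w => (S w /\ w <> x) \/ w = c) x).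
    { revert h. apply closure_mono. intros w [[Sw| ->] wx]; auto. }
    apply nc. apply (closure_mono (A := fun w => (S w /\ w <> x) \/ w = x));
      [intros w [[Sw _]| ->]; auto|exact (closure_exchange h' (iS x Sx))].
Qed.

Lemma independent_of_lists S :
  (forall x l, S x -> (forall w, In w l -> S w /\ w <> x) -> ~ cl (fun w => In w l) x) ->
  independent S.
Proof.
  intros H x Sx hx. destruct (closure_finitary hx) as [l [hl hl']]. exact (H x l Sx hl hl').
Qed.

Lemma independent_list S x l : independent S -> S x -> (forall w, In w l -> S w /\ w <> x) ->
  ~ cl (fun w => In w l) x.
Proof. intros iS Sx hl hx. apply (iS x Sx). revert hx. apply closure_mono. exact hl. Qed.

Lemma independent_extend I0 T : independent I0 -> subset I0 T ->
  exists I, subset I0 I /\ subset I T /\ independent I /\ subset T (cl I).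
Proof.
  intros i0 I0T.
  destruct (@zorn_subset X (fun S => subset S T /\ independent (fun w => I0 w \/ S w)))
    as [S [[ST iS] Smax]].
  - intros F FP Ftot. split.
    + intros w [S [FS Sw]]. apply (proj1 (FP S FS)); auto.
    + apply independent_of_lists. intros x l hx hl.
      destruct (chain_covers_list (P0 := I0) Ftot (fun S1 S2 w h => h w) (l := x :: l))
        as [all|[M [FM HM]]].
      * intros w [<-|hw]; [destruct hx as [h|h]; auto|destruct (hl w hw) as [[h|h] _]; auto].
      * apply (independent_list i0 (all x (or_introl eq_refl))).
        intros w hw. split; [apply all; right; auto|apply (hl w hw)].
      * apply (independent_list (proj2 (FP M FM)) (HM x (or_introl eq_refl))).
        intros w hw. split; [apply HM; right; auto|apply (hl w hw)].
  - exists (fun w => I0 w \/ S w). repeat split; [intros w h; auto|intros w [h|h]; auto|auto|].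
    intros t Tt. apply NNPP. intros nt.
    assert (St : S t).
    { apply (Smax (fun w => S w \/ w = t)); [intros w h; auto| |auto].
      split; [intros w [h| ->]; auto|].
      apply (independent_subset (independent_add iS nt)). intros w [h|[h|h]]; auto. }
    apply nt, subset_closure. auto.
Qed.

Section Steinitz.
Variables I C : X -> Prop.
Hypothesis I_independent : independent I.
Hypothesis I_spanned : subset I (cl C).

Definition exchanged (G : X * X -> Prop) : X -> Prop :=
  fun w => (I w /\ ~ exists y, G (w, y)) \/ exists x, G (x, w).

(* [G] is the graph of a partial injection from [I] to [C] along which points of [I] have
   been exchanged for points of [C] without losing independence. *)
Record exchange_graph (G : X * X -> Prop) : Prop := {
  eg_range : forall x y, G (x, y) -> I x /\ C y;
  eg_functional : forall x y y', G (x, y) -> G (x, y') -> y = y';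
  eg_injective : forall x x' y, G (x, y) -> G (x', y) -> x = x';
  eg_hit_exchanged : forall x y, G (x, y) -> I y -> exists z, G (y, z);
  eg_independent : independent (exchanged G) }.

Lemma exchange_graph_chain (F : (X * X -> Prop) -> Prop) :
  (forall G, F G -> exchange_graph G) ->
  (forall G1 G2, F G1 -> F G2 -> subset G1 G2 \/ subset G2 G1) ->
  exchange_graph (fun p => exists G, F G /\ G p).
Proof.
  intros FG Ftot. split.
  - intros x y [G [FG' h]]. apply (eg_range (FG G FG')); auto.
  - intros x y y' [G1 [F1 h1]] [G2 [F2 h2]].
    destruct (Ftot G1 G2 F1 F2) as [s|s];
      [apply (eg_functional (FG G2 F2) (s _ h1) h2)|apply (eg_functional (FG G1 F1) h1 (s _ h2))].
  - intros x x' y [G1 [F1 h1]] [G2 [F2 h2]].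
    destruct (Ftot G1 G2 F1 F2) as [s|s];
      [apply (eg_injective (FG G2 F2) (s _ h1) h2)|apply (eg_injective (FG G1 F1) h1 (s _ h2))].
  - intros x y [G [FG' h]] Iy. destruct (eg_hit_exchanged (FG G FG') h Iy) as [z hz].
    exists z, G. auto.
  - apply independent_of_lists. intros x0 l hx0 hl.
    set (P0 := fun w => I w /\ ~ exists y, exists G, F G /\ G (w, y)).
    destruct (chain_covers_list (Q := fun G w => exists x, G (x, w)) (P0 := P0) Ftot)
      with (l := x0 :: l) as [all|[M [FM HM]]].
    + intros G1 G2 w s [x h]. exists x; auto.
    + intros w hw.
      assert (D : exchanged (fun p => exists G, F G /\ G p) w).
      { destruct hw as [<-|hw]; auto. apply (hl w hw). }
      destruct D as [D|[x [G [FG' h]]]]; auto. right. exists G. eauto.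
    + apply (independent_list I_independent (proj1 (all x0 (or_introl eq_refl)))).
      intros w hw. split; [apply all; right; auto|apply (hl w hw)].
    + assert (P0M : forall w, P0 w \/ (exists x, M (x, w)) -> exchanged M w).
      { intros w [[Iw nw]|h]; [left|right; auto]. split; auto.
        intros [y hy]. apply nw. exists y, M. auto. }
      apply (independent_list (eg_independent (FG M FM)) (P0M x0 (HM x0 (or_introl eq_refl)))).
      intros w hw. split; [apply P0M, HM; right; auto|apply (hl w hw)].
Qed.

Lemma exchange_candidate G x : exchange_graph G -> I x -> exchanged G x ->
  exists c, C c /\ ~ cl (fun w => exchanged G w /\ w <> x) c.
Proof.
  intros eG Ix Dx. apply NNPP. intros allC. apply (eg_independent eG Dx).
  apply (closure_min (A := C)); [apply closure_flat| |apply I_spanned; auto].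
  intros c Cc. apply NNPP. intros h. apply allC. eauto.
Qed.

Lemma exchange_graph_extend G x : exchange_graph G -> I x -> ~ (exists y, G (x, y)) ->
  exists c, exchange_graph (fun p => G p \/ p = (x, c)).
Proof.
  intros eG Ix nx.
  set (D := exchanged G).
  assert (Dx : D x) by (left; auto).
  assert (not_hit : forall x1, ~ G (x1, x)).
  { intros x1 h. destruct (eg_hit_exchanged eG h Ix) as [z hz]. apply nx. eauto. }
  destruct (exchange_candidate eG Ix Dx) as [c [Cc nc]].
  assert (D_except_x : forall w, D w -> w <> x -> ~ w = c).
  { intros w Dw wx ->. apply nc, subset_closure. auto. }
  exists c. split.
  - intros x1 y [h|h]; [apply (eg_range eG); auto|injection h; intros -> ->; auto].
  - intros x1 y y' [h|h] [h'|h'].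
    + apply (eg_functional eG h h').
    + injection h'; intros -> ->. exfalso. eauto.
    + injection h; intros -> ->. exfalso. eauto.
    + congruence.
  - intros x1 x2 y [h|h] [h'|h'].
    + apply (eg_injective eG h h').
    + injection h'; intros -> ->. exfalso.
      apply (D_except_x c); [right; eauto|intros ->; apply (not_hit x1 h)|auto].
    + injection h; intros -> ->. exfalso.
      apply (D_except_x c); [right; eauto|intros ->; apply (not_hit x2 h')|auto].
    + congruence.
  - intros x1 y [h|h] Iy.
    + destruct (eg_hit_exchanged eG h Iy) as [z hz]. eauto.
    + injection h; intros -> ->.
      destruct (classic (c = x)) as [->|cx]; [exists x; auto|].
      destruct (classic (exists z, G (c, z))) as [[z hz]|nz]; [eauto|].
      exfalso. apply (D_except_x c); [left; auto|auto|auto].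
  - apply (independent_subset (S := fun w => (D w /\ w <> x) \/ w = c)).
    + apply independent_add; auto.
      apply (independent_subset (eg_independent eG)). intros w [Dw _]; auto.
    + intros w [[Iw nw]|[x1 [h|h]]].
      * left. split.
        -- left. split; auto. intros [y hy]. apply nw. eauto.
        -- intros ->. apply nw. eauto.
      * left. split; [right; eauto|]. intros ->. apply (not_hit x1 h).
      * injection h; intros ->; auto.
Qed.

Lemma card_le_independent_spanned : card_le {x | I x} {x | C x}.
Proof.
  destruct (@zorn_subset (X * X) exchange_graph) as [G [eG Gmax]].
  { apply exchange_graph_chain. }
  assert (G_total : forall x, I x -> exists y, G (x, y)).
  { intros x Ix. apply NNPP. intros nx.
    destruct (exchange_graph_extend eG Ix nx) as [c ec].
    apply nx. exists c. apply (Gmax _ (fun p h => or_introl h) ec). auto. }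
  exists (fun s => let (y, Gy) := constructive_indefinite_description _ (G_total _ (proj2_sig s)) in
                   exist C y (proj2 (eg_range eG Gy))).
  intros [a Ia] [b Ib]. simpl.
  destruct (constructive_indefinite_description _ (G_total a Ia)) as [ya Ha].
  destruct (constructive_indefinite_description _ (G_total b Ib)) as [yb Hb].
  intros e. injection e; intros <-. apply subset_eq_compat.
  apply (eg_injective eG Ha Hb).
Qed.

End Steinitz.

Lemma modular_law_list A B l : flat L A -> flat L B -> (forall w, In w l -> A w \/ B w) ->
  forall z, B z -> cl (fun w => A w \/ In w l) z ->
  cl (fun w => (A w /\ B w) \/ (In w l /\ B w)) z.
Proof.
  intros FA FB. induction l as [|b l IH]; intros Hl z Bz hz.
  - apply subset_closure. left. split; auto.
    revert hz. apply (closure_min FA). intros w [h|[]]; auto.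
  - set (T := fun w => (A w /\ B w) \/ (In w (b :: l) /\ B w)).
    assert (IH' : forall y, B y -> cl (fun w => A w \/ In w l) y -> cl T y).
    { intros y By hy.
      apply (closure_mono (A := fun w => (A w /\ B w) \/ (In w l /\ B w)));
        [|exact (IH (fun w hw => Hl w (or_intror hw)) y By hy)].
      intros w [h|[h1 h2]]; [left|right]; simpl; auto. }
    destruct (classic (A b)) as [Ab|nAb].
    { apply IH'; auto. revert hz. apply closure_min; [apply closure_flat|].
      intros w [h|[<-|h]]; apply subset_closure; auto. }
    assert (Bb : B b) by (destruct (Hl b (or_introl eq_refl)); tauto).
    assert (Tb : cl T b) by (apply subset_closure; right; simpl; auto).
    assert (hz' : cl (fun w => (A w \/ In w l) \/ w = b) z).
    { revert hz. apply closure_mono. intros w [h|[<-|h]]; auto. }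
    destruct (closure_add_point hz') as [->|[hA|[a [ha [ab lab]]]]]; auto.
    destruct (classic (z = a)) as [->|za]; auto.
    destruct (classic (z = b)) as [->|zb]; auto.
    assert (Ba : B a).
    { apply (FB z b zb Bz Bb a). apply (line_eq ab zb lab (line_right ab)). apply line_left; auto. }
    apply (closure_line ab (IH' a Ba ha) Tb lab).
Qed.

Lemma modular_law A B S z : flat L A -> flat L B -> subset S B ->
  subset (fun w => A w /\ B w) (cl S) -> B z -> cl (fun w => A w \/ S w) z -> cl S z.
Proof.
  intros FA FB SB ABS Bz hz. destruct (closure_finitary hz) as [l [hl hc]].
  assert (lAB : forall w, In w l -> A w \/ B w).
  { intros w hw. destruct (hl w hw); auto. }
  assert (hz' := modular_law_list FA FB lAB Bz
                   (closure_mono (A := fun w => In w l) (fun w hw => or_intror hw) hc)).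
  revert hz'. apply closure_min; [apply closure_flat|].
  intros w [h|[h1 h2]]; auto. destruct (hl w h1); [apply ABS; auto|apply subset_closure; auto].
Qed.

Lemma rank_basis_equipotent Y BY J : rank_basis L Y BY -> independent J -> subset J Y ->
  subset Y (cl J) -> equipotent {x | BY x} {x | J x}.
Proof.
  intros [YB Bmin] iJ JY YJ. apply card_le_antisym; auto.
  apply card_le_independent_spanned; auto. intros w hw. apply YB, JY, hw.
Qed.

(* Extend a basis [I] of [A /\ B] to a basis [IA] of [A] and then to a basis [IU] of [A \/ B];
   by the modular law [I] together with [IU \ IA] is a basis of [B]. *)
Lemma strongly_regular_modular : modular L.
Proof.
  intros A B FA FB BI BU BA BB rI rU rA rB.
  destruct (@independent_extend (fun _ => False) (fun z => A z /\ B z)) as [I [_ [IAB [iI ABI]]]].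
  { intros x []. } { intros x []. }
  destruct (@independent_extend I A iI) as [IA [IIA [IAA [iIA AIA]]]].
  { intros x h. apply (IAB x h). }
  destruct (@independent_extend IA (fun w => IA w \/ B w) iIA) as [IU [IAU [IUT [iIU TIU]]]].
  { intros x h; auto. }
  set (IB := fun w => I w \/ (IU w /\ ~ IA w)).
  assert (iIB : independent IB).
  { apply (independent_subset iIU). intros w [h|[h _]]; auto. }
  assert (IBB : subset IB B).
  { intros w [h|[h1 h2]]; [apply (IAB w h)|destruct (IUT w h1); tauto]. }
  assert (BIB : subset B (cl IB)).
  { intros z Bz. apply (modular_law FA FB IBB); auto.
    - intros w h. apply (closure_mono (A := I)); [intros v hv; left; auto|apply ABI; auto].
    - apply (closure_mono (A := IU)); [|apply TIU; auto]. intros w h.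
      destruct (classic (IA w)); [left; apply IAA; auto|right; right; auto]. }
  assert (IUAB : subset IU (fun w => A w \/ B w)).
  { intros z h. destruct (IUT z h); auto. }
  assert (ABIU : subset (fun w => A w \/ B w) (cl IU)).
  { intros z [h|h]; [apply (closure_mono (A := IA)); auto|apply TIU; auto]. }
  apply (equipotent_trans (equipotent_sum (rank_basis_equipotent rI iI IAB ABI)
                                          (rank_basis_equipotent rU iIU IUAB ABIU))).
  apply (equipotent_trans (equipotent_sum_nested IIA IAU)).
  apply equipotent_sym, equipotent_sum; [apply (rank_basis_equipotent rA)|apply (rank_basis_equipotent rB)];
    auto.
Qed.

End StronglyRegular.
End Liner.

Theorem theorem5p5p1 (X : Type) (L : (X -> Prop) -> Prop) (HL : is_liner L) :
  (modular L <-> strongly_regular L) /\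
  (strongly_regular L <-> no_disjoint_coplanar_lines L).
Proof.
  assert (ND_SR := no_disjoint_coplanar_lines_strongly_regular HL).
  assert (SR_M := strongly_regular_modular HL).
  assert (M_ND := modular_no_disjoint_coplanar_lines HL).
  tauto.
Qed.
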